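(* Let $(A,R)$ be a relationally complete cartesian discrete combinatory object, with meet $\wedge:A\times A\to A$, top element $\top\in A$, and generic function $@\in R$ (a partial function). Define the partial application $a\cdot b=@(a\wedge b)$ (associating to the left) and $A_\#=\{a\in A\mid\{(\top,a)\}\in R\}$. Then: (i) for every polynomial $p[x_1,\dots,x_n]$ over $(A,\cdot)$ with coefficients in $A_\#$, the partial function $A^n\rightharpoonup A$, $\vec a\mapsto p[\vec a]$, is in $R^{(n)}$; (ii) for all $n\in\mathbb{N}$ and $r\in R^{(n+1)}$ there is $e\in A_\#$ such that for all $a_1,\dots,a_n,b\in A$: $e\cdot a_1\cdots a_n$ is defined, and whenever $r(a_1,\dots,a_n,b)$ is defined, $e\cdot a_1\cdots a_n\cdot b$ is defined and equal to $r(a_1,\dots,a_n,b)$; (iii) $(A,\cdot,A_\#)$ is a weak relative PCA, and the uniform preorder structure on $A$ consisting of all relations contained in some partial function $(e\cdot -):A\rightharpoonup A$ with $e\in A_\#$ is equal to $R$.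
   Context: A uniform preorder is a pair $(A,R)$ with $A$ a set and $R\subseteq P(A\times A)$ such that $\mathrm{id}_A\in R$, $s\circ r\in R$ whenever $r,s\in R$, and $s\in R$ whenever $r\in R$ and $s\subseteq r$; it is a discrete combinatory object (DCO) if every $r\in R$ is single-valued. Monotone maps $f:(A,R)\to(B,S)$: functions with $\{(fa,fa')\mid(a,a')\in r\}\in S$ for $r\in R$, ordered by $f\le g$ iff $\{(fa,ga)\}\in S$; finite 2-products: terminal singleton, product $(A\times B,R\otimes S)$ with $R\otimes S$ the relations contained in some $r\times s$. $(A,R)$ is cartesian if the terminal projection and diagonal have right adjoints $\top:1\to A$ and $\wedge:A\times A\to A$ (adjunction $f\dashv g$: $\mathrm{id}\le gf$, $fg\le\mathrm{id}$). A cartesian $(A,R)$ is relationally complete if there is $@\in R$ such that for every $r\in R$ there is a total function $\tilde r$ with graph in $R$ satisfying: $(a\wedge b,c)\in r$ implies $(\tilde r(a)\wedge b,c)\in @$ for all $a,b,c$. Define $\wedge^{(0)}(\ast)=\top$ and $\wedge^{(n+1)}(\vec a,b)=\wedge^{(n)}(\vec a)\wedge b$, and $R^{(n)}=\{r\subseteq A^n\times A\mid \exists s\in R.\ r=s\circ\wedge^{(n)}\}$. A polynomial over $(A,\cdot)$ is a term built from variables, constants in $A$ and application; $p[\vec a]$ is its possibly undefined value. A weak relative PCA is a triple $(A,\cdot,A_\#)$ with $\cdot:A\times A\rightharpoonup A$ a partial binary operation and $A_\#\subseteq A$ closed under application (whenever defined) and containing elements $\mathsf{k},\mathsf{s}$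 such that for all $a,b,c\in A$: $\mathsf{k}\cdot a\cdot b$ is defined and equals $a$; $\mathsf{s}\cdot a\cdot b$ is defined; and if $a\cdot c\cdot(b\cdot c)$ is defined then $\mathsf{s}\cdot a\cdot b\cdot c$ is defined and equals it. *)

From mathcomp Require Import all_boot.
Set Implicit Arguments.
Unset Strict Implicit.
Unset Printing Implicit Defensive.

Definition rel_on (A : Type) := A -> A -> Prop.
Definition relset (A : Type) := rel_on A -> Prop.

Section UP.
Variables A B : Type.

Definition id_rel : rel_on A := fun a b => a = b.
Definition comp_rel (s r : rel_on A) : rel_on A :=
  fun a c => exists b, r a b /\ s b c.
Definition rel_incl (r s : rel_on A) := forall a b, r a b -> s a b.
Definition single_valued (r : rel_on A) := forall a b b', r a b -> r a b' -> b = b'.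
Definition graph (f : A -> A) : rel_on A := fun a b => b = f a.

Definition uniform_preorder (R : relset A) : Prop :=
  [/\ R id_rel,
      (forall r s, R r -> R s -> R (comp_rel s r)) &
      (forall r s, R r -> rel_incl s r -> R s)].

Definition DCO (R : relset A) : Prop :=
  uniform_preorder R /\ (forall r, R r -> single_valued r).

End UP.

Definition monotone (A B : Type) (R : relset A) (S : relset B) (f : A -> B) :=
  forall r, R r -> S (fun b b' => exists a a', [/\ r a a', b = f a & b' = f a']).

Definition fun_le (A B : Type) (S : relset B) (f g : A -> B) :=
  S (fun b b' => exists a, b = f a /\ b' = g a).

Definition adjunction (A B : Type) (R : relset A) (S : relset B)
    (f : A -> B) (g : B -> A) :=
  [/\ monotone R S f, monotone S R g,
      fun_le R id (fun a => g (f a)) & fun_le S (fun b => f (g b)) id].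

Definition terminal_up : relset unit := fun _ => True.

Definition prod_up (A B : Type) (R : relset A) (S : relset B) : relset (A * B) :=
  fun t => exists r s, [/\ R r, S s &
    forall x y, t x y -> r x.1 y.1 /\ s x.2 y.2].

Definition cartesian (A : Type) (R : relset A) (top : A) (meet : A -> A -> A) :=
  adjunction R terminal_up (fun _ => tt) (fun _ => top) /\
  adjunction R (prod_up R R) (fun a => (a, a)) (fun p => meet p.1 p.2).

Definition generic_fun (A : Type) (R : relset A) (meet : A -> A -> A) (gen : rel_on A) :=
  R gen /\
  forall r, R r -> exists f : A -> A, R (graph f) /\
    forall a b c, r (meet a b) c -> gen (meet (f a) b) c.

Definition relationally_complete (A : Type) (R : relset A) (meet : A -> A -> A) :=
  exists gen, generic_fun R meet gen.

Definition wedge_n (A : Type) (top : A) (meet : A -> A -> A) (n : nat)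
    (v : n.-tuple A) : A := foldl meet top v.

Definition Rn (A : Type) (R : relset A) (top : A) (meet : A -> A -> A) (n : nat)
    (r : n.-tuple A -> A -> Prop) : Prop :=
  exists s, R s /\ forall v c, r v c <-> s (wedge_n top meet v) c.

(** partial application  a . b = @(a /\ b), as a (functional) relation:
    [papp meet gen a b c] means  a . b  is defined and equals c. *)
Definition papp (A : Type) (meet : A -> A -> A) (gen : rel_on A) (a b c : A) : Prop :=
  gen (meet a b) c.

Definition sharp (A : Type) (R : relset A) (top : A) (a : A) : Prop :=
  R (fun x y => x = top /\ y = a).

Fixpoint appn (A : Type) (app : A -> A -> A -> Prop) (e : A) (s : seq A) (c : A) : Prop :=
  match s with
  | [::] => c = e
  | a :: s' => exists d, app e a d /\ appn app d s' c
  end.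

Inductive poly (A : Type) (n : nat) : Type :=
  | PVar of 'I_n
  | PConst of A
  | PApp of poly A n & poly A n.

Fixpoint coeffs_in (A : Type) (n : nat) (P : A -> Prop) (p : poly A n) : Prop :=
  match p with
  | PVar _ => True
  | PConst a => P a
  | PApp p q => coeffs_in P p /\ coeffs_in P q
  end.

(** [peval app v p c] : p[v] is defined and equals c. *)
Inductive peval (A : Type) (app : A -> A -> A -> Prop) (n : nat) (v : n.-tuple A)
  : poly A n -> A -> Prop :=
  | ev_var i : peval app v (PVar A i) (tnth v i)
  | ev_const a : peval app v (PConst n a) a
  | ev_app p q a b c :
      peval app v p a -> peval app v q b -> app a b c -> peval app v (PApp p q) c.

Definition weak_rpca (A : Type) (app : A -> A -> A -> Prop) (S : A -> Prop) : Prop :=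
  [/\ (forall a b c c', app a b c -> app a b c' -> c = c'),
      (forall a b c, S a -> S b -> app a b c -> S c) &
      exists k s, [/\ S k, S s &
        forall a b c : A,
          [/\ appn app k [:: a; b] a,
              (exists d, appn app s [:: a; b] d) &
              (forall u w x, app a c u -> app b c w -> app u w x ->
                 appn app s [:: a; b; c] x)]]].

From mathcomp Require Import all_boot.
Set Implicit Arguments.
Unset Strict Implicit.
Unset Printing Implicit Defensive.

(* The cartesian structure makes R closed under constants from A_#, under
   pairing [x |-> f x /\ g x] and under the projections of the meet; with the
   generic function it is also closed under [x |-> f x . g x].  Since the
   projections are single-valued, the meet is injective, so a relation on
   tuples is in R^(n) as soon as its image under the iterated meet is in R;
   induction on polynomials gives (i).  For (ii), relational completeness
   curries the last argument away, and iterating it n times leaves a constant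
   relation on top, whose value is the code e.  The combinators k and s of
   (iii) are the codes of the polynomials x and x z (y z), and a relation r in
   R is contained in [e . -] for the code e of [(a /\ b) |-> r b]. *)

Lemma appn_rcons (A : Type) (app : A -> A -> A -> Prop) e s a c :
  appn app e (rcons s a) c <-> exists d, appn app e s d /\ app d a c.
Proof.
elim: s e => [|x s IH] e /=.
  by split; [case=> d [? ->]; exists e | case=> d [-> ?]; exists c].
split.
  by case=> d [Hd /IH [d' [Hd' ?]]]; exists d'; split=> //; exists d.
by case=> d [[d' [Hd' Hd]] ?]; exists d'; split=> //; apply/IH; exists d.
Qed.

Section RelationallyComplete.
Variables (A : Type) (R : relset A) (top : A) (meet : A -> A -> A) (gen : rel_on A).
Hypothesis HR : uniform_preorder R.
Hypothesis R_single_valued : forall r, R r -> single_valued r.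
Hypothesis HC : cartesian R top meet.
Hypothesis HG : generic_fun R meet gen.

Local Notation app := (papp meet gen).

Lemma R_id : R (@id_rel A).
Proof. by case: HR. Qed.

Lemma R_comp r s : R r -> R s -> R (comp_rel s r).
Proof. by case: HR => _ + _; apply. Qed.

Lemma R_sub r s : R r -> rel_incl s r -> R s.
Proof. by case: HR => _ _; apply. Qed.

Lemma R_top : R (fun _ y => y = top).
Proof. by case: HC => -[_ _ Hunit _] _; apply: R_sub Hunit _ => a _ ->; exists a. Qed.

Lemma R_diag : R (fun x y => y = meet x x).
Proof. by case: HC => _ [_ _ Hunit _]; apply: R_sub Hunit _ => a _ ->; exists a. Qed.

Lemma R_meet_prod r s : R r -> R s ->
  R (fun x y => exists a b c d, [/\ r a c, s b d, x = meet a b & y = meet c d]).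
Proof.
move=> Hr Hs; case: HC => _ [_ Hmeet _ _].
have /Hmeet : prod_up R R (fun x y => r x.1 y.1 /\ s x.2 y.2).
  by exists r, s; split=> // x y [].
move=> Hrs; apply: R_sub Hrs _ => _ _ [a [b [c [d [? ? -> ->]]]]].
by exists (a, b), (c, d).
Qed.

Lemma R_fst : R (fun x y => exists b, x = meet y b).
Proof.
case: HC => _ [_ _ _ [r [s [Hr _ Hcounit]]]].
apply: R_sub Hr _ => _ a [b ->].
by case: (Hcounit (meet a b, meet a b) (a, b)) => //; exists (a, b).
Qed.

Lemma R_snd : R (fun x y => exists a, x = meet a y).
Proof.
case: HC => _ [_ _ _ [r [s [_ Hs Hcounit]]]].
apply: R_sub Hs _ => _ b [a ->].
by case: (Hcounit (meet a b, meet a b) (a, b)) => //; exists (a, b).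
Qed.

Lemma R_pair r s : R r -> R s ->
  R (fun x y => exists c d, [/\ r x c, s x d & y = meet c d]).
Proof.
move=> Hr Hs; apply: R_sub (R_comp R_diag (R_meet_prod Hr Hs)) _.
by move=> x _ [c [d [? ? ->]]]; exists (meet x x); split=> //; exists x, x, c, d.
Qed.

Lemma R_const e : sharp R top e -> R (fun _ y => y = e).
Proof. by move=> He; apply: R_sub (R_comp R_top He) _ => x _ ->; exists top. Qed.

Lemma R_gen : R gen.
Proof. by case: HG. Qed.

Lemma R_app r s : R r -> R s ->
  R (fun x y => exists a b, [/\ r x a, s x b & app a b y]).
Proof.
move=> Hr Hs; apply: R_sub (R_comp (R_pair Hr Hs) R_gen) _.
by move=> x y [a [b [? ? ?]]]; exists (meet a b); split=> //; exists a, b.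
Qed.

Lemma meet_inj a b a' b' : meet a b = meet a' b' -> a = a' /\ b = b'.
Proof.
move=> E; split.
  by apply: (R_single_valued R_fst (a := meet a b)); [exists b | rewrite E; exists b'].
by apply: (R_single_valued R_snd (a := meet a b)); [exists a | rewrite E; exists a'].
Qed.

Definition wedge (s : seq A) : A := foldl meet top s.

Lemma wedge_rcons s a : wedge (rcons s a) = meet (wedge s) a.
Proof. exact: foldl_rcons. Qed.

Lemma wedge_inj s s' : size s = size s' -> wedge s = wedge s' -> s = s'.
Proof.
elim/last_ind: s s' => [|s a IH] s'; case/lastP: s' => [|s' a'];
  rewrite ?size_rcons // !wedge_rcons => -[Hs] /meet_inj [/(IH _ Hs) -> ->] //.
Qed.

Lemma R_wedge_nth n i : i < n ->
  R (fun x c => exists s, [/\ size s = n, x = wedge s & c = nth top s i]).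
Proof.
elim: n => [//|n IH] lt_i_n1.
case: (ltnP i n) => [lt_in | le_ni].
  apply: R_sub (R_comp R_fst (IH lt_in)) _ => x c [s []].
  case/lastP: s => [//|s a]; rewrite size_rcons => -[Hs] -> ->.
  exists (wedge s); split; first by rewrite wedge_rcons; exists a.
  by exists s; rewrite nth_rcons Hs lt_in.
have -> : i = n by apply/eqP; rewrite eqn_leq le_ni -ltnS lt_i_n1.
apply: R_sub R_snd _ => x c [s []].
case/lastP: s => [//|s a]; rewrite size_rcons => -[Hs] -> ->.
by rewrite wedge_rcons nth_rcons Hs ltnn eqxx; exists (wedge s).
Qed.

Lemma Rn_of_wedge_image n (r : n.-tuple A -> A -> Prop) t : R t ->
  (forall v c, r v c -> t (wedge v) c) -> Rn R top meet r.
Proof.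
move=> Ht Hrt; exists (fun x c => exists v : n.-tuple A, x = wedge v /\ r v c).
split; first by apply: R_sub Ht _ => _ c [v [-> /Hrt]].
move=> v c; split; first by exists v.
case=> v' [E ?]; suff -> : v = v' by [].
by apply: val_inj; apply: wedge_inj E; rewrite !size_tuple.
Qed.

Lemma peval_wedge_image n (p : poly A n) : coeffs_in (sharp R top) p ->
  exists t, R t /\ forall v c, peval app v p c -> t (wedge v) c.
Proof.
elim: p => [i | e | p IHp q IHq] /=.
- move=> _; exists (fun x c => exists s, [/\ size s = n, x = wedge s & c = nth top s i]).
  split=> [|v c Hev]; first exact: R_wedge_nth.
  by inversion Hev; exists v; rewrite size_tuple (tnth_nth top).
- move=> He; exists (fun _ y => y = e); split=> [|v c Hev]; first exact: R_const.
  by inversion Hev.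
- case=> /IHp [tp [Hp Hpt]] /IHq [tq [Hq Hqt]].
  exists (fun x y => exists a b, [/\ tp x a, tq x b & app a b y]).
  split=> [|v c Hev]; first exact: R_app.
  by inversion Hev; subst; exists a, b; split; [apply: Hpt | apply: Hqt |].
Qed.

Lemma Rn_peval n (p : poly A n) : coeffs_in (sharp R top) p ->
  Rn R top meet (fun v c => peval app v p c).
Proof. by case/peval_wedge_image=> t [Ht Hpt]; apply: Rn_of_wedge_image Ht Hpt. Qed.

Lemma sharp_graph_top g : R (graph g) -> sharp R top (g top).
Proof. by move=> Hg; apply: R_sub Hg _ => _ _ [-> ->]. Qed.

Lemma sharp_curry_graph n g : R (graph g) -> exists e, sharp R top e /\
  forall s, size s = n -> appn app e s (g (wedge s)).
Proof.
elim: n g => [|n IH] g Hg.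
  by exists (g top); split=> [|[]//]; apply: sharp_graph_top.
case: HG => _ /(_ _ Hg) [f [Hf Hfg]].
have [e [He Hef]] := IH f Hf; exists e; split=> //.
case/lastP=> [//|s a]; rewrite size_rcons => -[Hs].
apply/appn_rcons; exists (f (wedge s)); split; first exact: Hef.
by rewrite wedge_rcons; apply: Hfg.
Qed.

Lemma Rn_curry n (r : n.+1.-tuple A -> A -> Prop) : Rn R top meet r ->
  exists e, sharp R top e /\ forall (v : n.-tuple A) b,
    (exists d, appn app e v d) /\
    (forall c, r (rcons_tuple v b) c -> appn app e (rcons v b) c).
Proof.
case=> s [Hs Hrs]; case: HG => _ /(_ _ Hs) [f [Hf Hfs]].
have [e [He Hef]] := sharp_curry_graph n Hf.
exists e; split=> // v b; split; first by exists (f (wedge v)); apply/Hef/size_tuple.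
move=> c /Hrs; rewrite /wedge_n /= -/(wedge _) wedge_rcons => /Hfs Hc.
by apply/appn_rcons; exists (f (wedge v)); split=> //; apply/Hef/size_tuple.
Qed.

Lemma poly_combinator n (p : poly A n.+1) : coeffs_in (sharp R top) p ->
  exists e, sharp R top e /\ forall (v : n.-tuple A) b,
    (exists d, appn app e v d) /\
    (forall c, peval app (rcons_tuple v b) p c -> appn app e (rcons v b) c).
Proof. by move/Rn_peval/Rn_curry. Qed.

Lemma app_functional a b c c' : app a b c -> app a b c' -> c = c'.
Proof. exact: R_single_valued R_gen _ _ _. Qed.

Lemma sharp_app_closed a b c :
  sharp R top a -> sharp R top b -> app a b c -> sharp R top c.
Proof.
move=> Ha Hb Hc; apply: R_sub (R_app (R_const Ha) (R_const Hb)) _ => _ _ [_ ->].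
by exists a, b.
Qed.

Lemma weak_rpca_app : weak_rpca app (sharp R top).
Proof.
split; [exact: app_functional | exact: sharp_app_closed |].
have [k [Hk Hk_app]] := poly_combinator (p := PVar A (@Ordinal 2 0 isT)) I.
pose x i : poly A 3 := PVar A i.
have [s [Hs Hs_app]] := poly_combinator
  (p := PApp (PApp (x (@Ordinal 3 0 isT)) (x (@Ordinal 3 2 isT)))
             (PApp (x (@Ordinal 3 1 isT)) (x (@Ordinal 3 2 isT))))
  (conj (conj I I) (conj I I)).
exists k, s; split=> // a b c; split.
- by apply: (Hk_app [tuple a] b).2; apply: (ev_var _ _ (@Ordinal 2 0 isT)).
- exact: (Hs_app [tuple a; b] a).1.
- move=> u w y Hu Hw Hy; apply: (Hs_app [tuple a; b] c).2.
  apply: (ev_app (a := u) (b := w)) => //.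
    by apply: (ev_app (a := a) (b := c)) => //; apply: ev_var.
  by apply: (ev_app (a := b) (b := c)) => //; apply: ev_var.
Qed.

Lemma R_app_sharp e : sharp R top e -> R (app e).
Proof.
move=> He; apply: R_sub (R_app (R_const He) R_id) _ => x y Hy.
by exists e, x.
Qed.

Lemma R_sub_app_sharp r : R r -> exists e, sharp R top e /\ rel_incl r (app e).
Proof.
move=> Hr; have /HG.2 [f [Hf Hfr]] := R_comp R_snd Hr.
exists (f top); split; first exact: sharp_graph_top.
by move=> x c Hxc; apply: Hfr; exists x; split=> //; exists top.
Qed.

Lemma R_eq_app_sharp r : R r <-> exists e, sharp R top e /\ rel_incl r (app e).
Proof.
split; first exact: R_sub_app_sharp.
by case=> e [/R_app_sharp He Hr]; apply: R_sub He Hr.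
Qed.

End RelationallyComplete.

Theorem proposition9p4 (A : Type) (R : relset A) (top : A)
    (meet : A -> A -> A) (gen : rel_on A) :
  DCO R -> cartesian R top meet -> generic_fun R meet gen ->
  (* (i) *)
  (forall (n : nat) (p : poly A n), coeffs_in (sharp R top) p ->
     Rn R top meet (fun v c => peval (papp meet gen) v p c)) /\
  (* (ii) *)
  (forall (n : nat) (r : n.+1.-tuple A -> A -> Prop), Rn R top meet r ->
     exists e, sharp R top e /\
       forall (v : n.-tuple A) (b : A),
         (exists d, appn (papp meet gen) e v d) /\
         (forall c, r (rcons_tuple v b) c -> appn (papp meet gen) e (rcons v b) c)) /\
  (* (iii) *)
  (weak_rpca (papp meet gen) (sharp R top) /\
   forall r : rel_on A,
     R r <-> exists e, sharp R top e /\ rel_incl r (papp meet gen e)).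
Proof.
move=> [HR Hsv] HC HG; split; last split; last split.
- by move=> n p; apply: (Rn_peval HR Hsv HC HG).
- by move=> n r; apply: (Rn_curry HR HG).
- exact: (weak_rpca_app HR Hsv HC HG).
- by move=> r; apply: (R_eq_app_sharp HR HC HG).
Qed.
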